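(* Let $\mathbf X\in\mathbb R^{n\times T}$, $k\le\min(n,T)$, $\mathbf W\in\mathbb R^{k\times n}$. Then $$\min_{\mathbf Y\in\mathbb R^{k\times T}}\max_{\mathbf M\in\mathbb R^{k\times k}}G(\mathbf Y,\mathbf M)=\max_{\mathbf M\in\mathbb R^{k\times k}}\min_{\mathbf Y\in\mathbb R^{k\times T}}G(\mathbf Y,\mathbf M)=-\frac2{T^{1/2}}\mathrm{Tr}\big((\mathbf W\mathbf X\mathbf X^\top\mathbf W^\top)^{1/2}\big),$$ where $G(\mathbf Y,\mathbf M)=-\frac2T\mathrm{Tr}(\mathbf X^\top\mathbf W^\top\mathbf Y)+\mathrm{Tr}\big(\mathbf M(\frac1T\mathbf Y\mathbf Y^\top-\mathbf I)\big)$. Consequently, with $L_{PSW}(\mathbf W,\mathbf M,\mathbf Y)=G(\mathbf Y,\mathbf M)+\mathrm{Tr}(\mathbf W^\top\mathbf W)$, one has $\max_{\mathbf M}\min_{\mathbf Y}L_{PSW}=\mathrm{Tr}\big(-\frac2{T^{1/2}}(\mathbf W\mathbf X\mathbf X^\top\mathbf W^\top)^{1/2}+\mathbf W\mathbf W^\top\big)$.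
   Context: Matrix square roots of positive semidefinite matrices are the positive semidefinite ones. *)

(* real closed field R (the statement is first-order over the
   reals, so it is stated for every rcfType, which includes the real numbers). *)
From HB Require Import structures.
From mathcomp Require Import all_boot all_order all_algebra.
Set Implicit Arguments. Unset Strict Implicit. Unset Printing Implicit Defensive.
Import Order.TTheory GRing.Theory Num.Theory.
Local Open Scope ring_scope.

Section Defs.
Variable R : rcfType.

Definition psd (p : nat) (A : 'M[R]_p) : Prop :=
  A^T = A /\ forall x : 'cV[R]_p, 0 <= (x^T *m A *m x) ord0 ord0.

Definition is_psd_sqrt (p : nat) (A S : 'M[R]_p) : Prop :=
  psd S /\ S *m S = A.

Definition is_max_of (U : Type) (f : U -> R) (v : R) : Prop :=
  (exists u, f u = v) /\ forall u, f u <= v.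
Definition is_min_of (U : Type) (f : U -> R) (v : R) : Prop :=
  (exists u, f u = v) /\ forall u, v <= f u.

(* min_a max_b f a b = v, inner max read in the extended reals
   (sup_b f a b may be +oo); the outer min is attained at some a whose
   inner max is attained and equals v. *)
Definition minmax_eq (A B : Type) (f : A -> B -> R) (v : R) : Prop :=
  (exists a, is_max_of (f a) v) /\
  (forall a w, w < v -> exists b, w < f a b).

Definition maxmin_eq (A B : Type) (f : A -> B -> R) (v : R) : Prop :=
  (exists b, is_min_of (fun a => f a b) v) /\
  (forall b w, v < w -> exists a, f a b < w).

Definition Gfun (n T k : nat) (X : 'M[R]_(n, T)) (W : 'M[R]_(k, n))
    (Y : 'M[R]_(k, T)) (M : 'M[R]_k) : R :=
  - (2 / T%:R) * \tr (X^T *m W^T *m Y)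
  + \tr (M *m ((T%:R)^-1 *: (Y *m Y^T) - 1%:M)).

Definition L_PSW (n T k : nat) (X : 'M[R]_(n, T)) (W : 'M[R]_(k, n))
    (M : 'M[R]_k) (Y : 'M[R]_(k, T)) : R :=
  Gfun X W Y M + \tr (W^T *m W).

End Defs.

From HB Require Import structures.
From mathcomp Require Import all_boot all_order all_algebra.
From mathcomp Require Import ring.
Import Order.TTheory GRing.Theory Num.Theory.
Local Open Scope ring_scope.

Set Implicit Arguments. Unset Strict Implicit. Unset Printing Implicit Defensive.

(* Write WX = S Q with Q Q^T = I (a polar decomposition, available since k <= T).
   At Y0 = sqrt T Q the constraint (1/T) Y0 Y0^T = I holds, so G(Y0, .) is
   constant equal to v = -(2/sqrt T) Tr S.  At M0 = S / sqrt T, completing the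
   square gives G(Y, M0) = v + Tr((Y - Y0)^T S (Y - Y0)) / T^(3/2) >= v, as S is
   positive semidefinite.  Thus (Y0, M0) is a saddle point of G with value v,
   which yields both the min-max and the max-min equalities; L_PSW differs from
   G by the constant Tr(W^T W). *)

Section OrthonormalRows.
Variable R : rcfType.

Lemma mulmx_trmx_diag m n (M : 'M[R]_(m, n)) i :
  (M *m M^T) i i = \sum_j M i j ^+ 2.
Proof. by rewrite !mxE; apply: eq_bigr => j _; rewrite mxE expr2. Qed.

Lemma mulmx_trmx_eq0 m n (M : 'M[R]_(m, n)) : M *m M^T = 0 -> M = 0.
Proof.
move=> MMt0; apply/matrixP => i j; rewrite mxE.
have /esym/eqP := mulmx_trmx_diag M i; rewrite MMt0 mxE.
rewrite psumr_eq0 => [/allP/(_ j) | j' _]; last exact: sqr_ge0.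
by rewrite mem_index_enum sqrf_eq0 => /(_ isT)/eqP.
Qed.

Lemma trmx_mul_eq0 m n p (A : 'M[R]_(m, n)) (B : 'M[R]_(p, n)) :
  A *m B^T = 0 -> B *m A^T = 0.
Proof. by move=> ABt0; rewrite -[LHS]trmxK trmx_mul trmxK ABt0 trmx0. Qed.

Lemma mulmx_eq0_of_gram m n p q (E : 'M[R]_(p, m)) (A : 'M[R]_(m, n))
    (S : 'M[R]_(m, q)) :
  S *m S^T = A *m A^T -> E *m S = 0 -> E *m A = 0.
Proof.
move=> gramSA ES0; apply: mulmx_trmx_eq0.
by rewrite trmx_mul mulmxA -(mulmxA E) -gramSA mulmxA ES0 !mul0mx.
Qed.

Lemma normalize_row n (x : 'rV[R]_n) :
  x != 0 -> exists2 c : R, c != 0 & (c *: x) *m (c *: x)^T = 1%:M.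
Proof.
move=> x0; have xx_gt0 : 0 < (x *m x^T) 0 0.
  rewrite lt0r mulmx_trmx_diag sumr_ge0 ?andbT => [|j _]; last exact: sqr_ge0.
  apply: contra x0 => /eqP xx0; apply/eqP/mulmx_trmx_eq0/matrixP => i j.
  by rewrite !ord1 mulmx_trmx_diag xx0 mxE.
exists (Num.sqrt ((x *m x^T) 0 0))^-1.
  by rewrite invr_eq0 gt_eqF ?sqrtr_gt0.
apply/matrixP => i j; rewrite !ord1 linearZ /= -scalemxAl -scalemxAr !mxE eqxx.
move: xx_gt0; rewrite mxE => xx_gt0.
by rewrite mulrA -expr2 exprVn sqr_sqrtr ?ltW // mulVf ?gt_eqF.
Qed.

Lemma orthogonal_unit_row p n (U : 'M[R]_(p, n)) (d : 'rV[R]_n) :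
  d *m U^T = 0 -> (\rank U < n)%N ->
  exists (x : 'rV[R]_n) (a : R), [/\ x *m x^T = 1%:M, x *m U^T = 0 & d = a *: x].
Proof.
move=> dU0 rankU; have [d0 | d_neq0] := eqVneq d 0.
  have : kermx U^T != 0.
    by rewrite -mxrank_eq0 mxrank_ker mxrank_tr -lt0n subn_gt0.
  case/rowV0Pn => y /sub_kermxP yU0 y0.
  have [c _ cy1] := normalize_row y0.
  by exists (c *: y), 0; split; rewrite ?d0 ?scale0r // -scalemxAl yU0 scaler0.
have [c c0 cd1] := normalize_row d_neq0.
exists (c *: d), c^-1; split => //; first by rewrite -scalemxAl dU0 scaler0.
by rewrite scalerA mulVf // scale1r.
Qed.

(* Gram-Schmidt. *)
Lemma orthonormal_factor p n (U : 'M[R]_(p, n)) m (B : 'M[R]_(m, n)) :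
  B *m U^T = 0 -> (m + \rank U <= n)%N ->
  exists (L : 'M[R]_m) (N : 'M[R]_(m, n)),
    [/\ N *m N^T = 1%:M, N *m U^T = 0 & B = L *m N].
Proof.
elim: m B => [|m IHm] B BU0 rank_le.
  by exists 0, 0; split; apply/matrixP => [[]].
move: B BU0 rank_le; rewrite -[m.+1]/(1 + m)%N => B BU0 rank_le.
rewrite -[B]vsubmxK; set b := usubmx (B : 'M_(1 + m, n)); set B' := dsubmx _.
move: BU0; rewrite -[B]vsubmxK mul_col_mx => /eqP; rewrite col_mx_eq0.
case/andP => /eqP bU0 /eqP B'U0.
have [L' [N' [N'N'1 N'U0 ->]]] := IHm B' B'U0 (ltnW rank_le).
pose d := b - b *m N'^T *m N'.
have dN'U0 : d *m (col_mx N' U)^T = 0.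
  rewrite tr_col_mx mul_mx_row /d !mulmxBl -!mulmxA N'N'1 mulmx1 subrr.
  by rewrite bU0 N'U0 !mulmx0 subrr row_mx0.
have rank_N'U : (\rank (col_mx N' U) < n)%N.
  rewrite -addsmxE; apply: leq_ltn_trans (mxrank_adds_leqif _ _) _.
  by apply: leq_trans rank_le; rewrite ltn_add2r ltnS rank_leq_row.
have [x [a [xx1 xN'U0 da]]] := orthogonal_unit_row dN'U0 rank_N'U.
move: xN'U0; rewrite tr_col_mx mul_mx_row -row_mx0 => /eq_row_mx[xN'0 xU0].
exists (block_mx a%:M (b *m N'^T) 0 L'), (col_mx x N').
split.
- rewrite tr_col_mx mul_col_row xx1 N'N'1 xN'0 (trmx_mul_eq0 xN'0).
  by rewrite scalar_mx_block.
- by rewrite mul_col_mx xU0 N'U0 col_mx0.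
- by rewrite mul_col_mx !mul_row_col mul_scalar_mx -da subrK mul0mx add0r.
Qed.

Lemma orthonormal_complement r k (V : 'M[R]_(r, k)) : V *m V^T = 1%:M ->
  exists W : 'M[R]_(k - r, k),
    [/\ W *m W^T = 1%:M, W *m V^T = 0 & V^T *m V + W^T *m W = 1%:M].
Proof.
move=> VV1; have rankV : \rank V = r.
  apply/eqP; rewrite eqn_leq rank_leq_row -{1}(mxrank1 R r) -VV1.
  exact: mxrankM_maxl.
have r_le_k : (r <= k)%N by rewrite -rankV rank_leq_col.
have [||_ [W [WW1 WV0 _]]] :=
  orthonormal_factor (U := V) (B := 0 : 'M_(k - r, k)).
- by rewrite mul0mx.
- by rewrite rankV subnK.
exists W; split => //.
have VW1 : col_mx V W *m (col_mx V W)^T = 1%:M.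
  by rewrite tr_col_mx mul_col_row VV1 WW1 WV0 (trmx_mul_eq0 WV0) scalar_mx_block.
have VW_free : row_free (col_mx V W)^T.
  rewrite /row_free mxrank_tr eqn_leq rank_leq_col /=.
  rewrite -{1}(subnKC r_le_k) -{1}(mxrank1 R (r + (k - r))%N) -VW1.
  exact: mxrankM_maxl.
apply/eqP; rewrite -subr_eq0 -(mulmx_free_eq0 _ VW_free).
rewrite tr_col_mx mul_mx_row !mulmxBl !mulmxDl mul1mx -!mulmxA VV1 WW1 WV0.
by rewrite (trmx_mul_eq0 WV0) !mulmx0 !mulmx1 addr0 add0r mul1mx !subrr row_mx0.
Qed.

Lemma mulmx_orthoproj m r k (B : 'M[R]_(m, k)) (V : 'M[R]_(r, k)) :
  V *m V^T = 1%:M -> (B <= V)%MS -> B *m (V^T *m V) = B.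
Proof.
move=> VV1 /mulmxKpV BV.
by rewrite -{1}BV -[_ *m V *m _]mulmxA (mulmxA V) VV1 mul1mx BV.
Qed.

Lemma orthonormal_row_basis m k (B : 'M[R]_(m, k)) :
  exists2 V : 'M[R]_(\rank B, k), V *m V^T = 1%:M & (B <= V)%MS.
Proof.
have [||L [V [VV1 _ BLV]]] :=
  orthonormal_factor (U := 0 : 'M_(0, k)) (B := row_base B).
- by rewrite trmx0 mulmx0.
- by rewrite mxrank0 addn0 rank_leq_col.
by exists V; rewrite // -(eq_row_base B) BLV submxMl.
Qed.

Lemma polar_decomposition k T (A : 'M[R]_(k, T)) (S : 'M[R]_k) :
  (k <= T)%N -> S^T = S -> S *m S = A *m A^T ->
  exists Q : 'M[R]_(k, T), Q *m Q^T = 1%:M /\ S *m Q = A.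
Proof.
move=> k_le_T ST SS; pose r := \rank S.
have [V VV1 SV] : exists2 V : 'M_(r, k), V *m V^T = 1%:M & (S <= V)%MS.
  exact: orthonormal_row_basis.
pose P := V^T *m V.
have PT : P^T = P by rewrite /P trmx_mul trmxK.
have SP : S *m P = S := mulmx_orthoproj VV1 SV.
have PS : P *m S = S by rewrite -[LHS]trmxK trmx_mul PT ST SP.
pose S1 := V *m S *m V^T.
have S1T : S1^T = S1 by rewrite /S1 !trmx_mul trmxK ST mulmxA.
have S1_unit : S1 \in unitmx.
  have S_S1 : S = V^T *m S1 *m V.
    by rewrite /S1 !mulmxA -/P -(mulmxA _ V^T) -/P PS SP.
  rewrite -row_free_unit /row_free eqn_leq rank_leq_row /= /r {1}S_S1.
  exact: leq_trans (mxrankM_maxl _ _) (mxrankM_maxr _ _).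
have PA : P *m A = A.
  apply/eqP; rewrite -subr_eq0 -{2}[A]mul1mx -mulmxBl; apply/eqP.
  apply: (mulmx_eq0_of_gram (S := S)); first by rewrite ST SS.
  by rewrite mulmxBl PS mul1mx subrr.
have [||_ [N [NN1 NA0 _]]] :=
  orthonormal_factor (U := A) (B := 0 : 'M_(k - r, T)).
- by rewrite mul0mx.
- apply: leq_trans k_le_T.
  rewrite -[X in (_ <= X)%N](subnK (rank_leq_row S)) leq_add2l.
  rewrite -PA -mulmxA; apply: leq_trans (mxrankM_maxl _ _) _.
  by rewrite mxrank_tr rank_leq_row.
have [W [WW1 WV0 PW1]] := orthonormal_complement VV1.
(* On the range of S, spanned by the rows of V, Q inverts S; on its orthogonal
   complement, spanned by the rows of W, it is the isometry N orthogonal to A. *)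
pose Q1 := V^T *m invmx S1 *m V *m A; pose Q2 := W^T *m N.
have Q1Q1 : Q1 *m Q1^T = P.
  have VAAV p (Z : 'M_(r, p)) : V *m (A *m (A^T *m (V^T *m Z))) = S1 *m (S1 *m Z).
    have SPS : S *m S = S *m P *m S by rewrite SP.
    by rewrite !mulmxA -(mulmxA V A) -SS SPS /P /S1 !mulmxA.
  rewrite /Q1 !trmx_mul !trmxK trmx_inv S1T -!mulmxA VAAV.
  by rewrite mulKmx // mulKVmx.
have Q1Q2 : Q1 *m Q2^T = 0.
  rewrite /Q1 /Q2 trmx_mul trmxK -mulmxA (mulmxA A) (trmx_mul_eq0 NA0).
  by rewrite mul0mx mulmx0.
have Q2Q2 : Q2 *m Q2^T = W^T *m W.
  by rewrite /Q2 trmx_mul trmxK -mulmxA (mulmxA N) NN1 mul1mx.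
exists (Q1 + Q2); split.
  rewrite raddfD /= mulmxDl !mulmxDr Q1Q1 Q1Q2 (trmx_mul_eq0 Q1Q2) Q2Q2.
  by rewrite addr0 add0r; exact: PW1.
have SVt : S *m V^T = V^T *m S1 by rewrite -{1}PS /P /S1 !mulmxA.
have SWt : S *m W^T = 0 by rewrite -SP /P -!mulmxA (trmx_mul_eq0 WV0) !mulmx0.
rewrite mulmxDr /Q1 /Q2 !mulmxA SVt SWt mul0mx addr0 -(mulmxA V^T S1).
by rewrite mulmxV // mulmx1 -/P PA.
Qed.

Lemma mxtrace_psd_ge0 k T (S : 'M[R]_k) (Z : 'M[R]_(k, T)) :
  psd S -> 0 <= \tr (Z^T *m S *m Z).
Proof.
case=> _ S_ge0; apply: sumr_ge0 => j _.
suff <- : ((col j Z)^T *m S *m col j Z) 0 0 = (Z^T *m S *m Z) j j by [].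
by rewrite tr_col -row_mul !mxE; apply: eq_bigr => l _; rewrite !mxE.
Qed.

End OrthonormalRows.

Section MinMax.
Variable R : rcfType.

Lemma saddle_point_eq (A B : Type) (f : A -> B -> R) a0 b0 v :
  (forall b, f a0 b <= v) -> (forall a, v <= f a b0) ->
  minmax_eq f v /\ maxmin_eq f v.
Proof.
move=> le_v ge_v; have f0 : f a0 b0 = v by apply/le_anti; rewrite le_v ge_v.
split; split.
- by exists a0; split; first exists b0.
- by move=> a w wv; exists b0; apply: lt_le_trans wv (ge_v a).
- by exists b0; split; first exists a0.
- by move=> b w vw; exists a0; apply: le_lt_trans (le_v b) vw.
Qed.

Lemma maxmin_eqDr (A B : Type) (f : A -> B -> R) v c :
  maxmin_eq f v -> maxmin_eq (fun a b => f a b + c) (v + c).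
Proof.
case=> [[b [[a fab] le_v]] near_v]; split.
  exists b; split; first by exists a; rewrite fab.
  by move=> a'; rewrite lerD2r le_v.
move=> b' w; rewrite -ltrBrDr => /(near_v b')[a' fa'].
by exists a'; rewrite -ltrBrDr.
Qed.

End MinMax.

Section PSWObjective.
Variables (R : rcfType) (n T k : nat) (X : 'M[R]_(n, T)) (W : 'M[R]_(k, n)).

Lemma GfunE Y M : Gfun X W Y M =
  - (2 / T%:R) * \tr ((W *m X)^T *m Y)
    + (T%:R)^-1 * \tr (M *m (Y *m Y^T)) - \tr M.
Proof.
by rewrite /Gfun trmx_mul mulmxBr mulmx1 -scalemxAr raddfB /= mxtraceZ addrA.
Qed.

Variables (S : 'M[R]_k) (Q : 'M[R]_(k, T)) (sT : R).
Hypotheses (ST : S^T = S) (QQ1 : Q *m Q^T = 1%:M) (SQ : S *m Q = W *m X)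
  (sT_neq0 : sT != 0) (sqr_sT : sT ^+ 2 = T%:R).

Let WXtQS : (W *m X)^T = Q^T *m S. Proof. by rewrite -SQ trmx_mul ST. Qed.
Let trQtSQ : \tr (Q^T *m S *m Q) = \tr S.
Proof. by rewrite mxtrace_mulC mulmxA QQ1 mul1mx. Qed.

Lemma Gfun_scaled_polar M : Gfun X W (sT *: Q) M = - (2 / sT) * \tr S.
Proof.
rewrite GfunE !linearZ /= -scalemxAl QQ1 -scalemxAr mxtraceZ mulmx1 WXtQS.
rewrite trQtSQ -sqr_sT; field; exact: sT_neq0.
Qed.

Lemma Gfun_complete_square Y :
  Gfun X W Y (sT^-1 *: S) = - (2 / sT) * \tr S
    + \tr ((Y - sT *: Q)^T *m S *m (Y - sT *: Q)) / sT ^+ 3.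
Proof.
have trYtSY : \tr (Y^T *m S *m Y) = \tr (S *m (Y *m Y^T)).
  by rewrite -mulmxA mxtrace_mulC mulmxA.
have trYtSQ : \tr (Y^T *m S *m Q) = \tr ((W *m X)^T *m Y).
  by rewrite -mulmxA SQ -mxtrace_tr trmx_mul trmxK.
rewrite [(Y - _)^T]raddfB /= [(_ *: Q)^T]linearZ /= !mulmxBl !mulmxBr.
rewrite -!scalemxAl -!scalemxAr !raddfB /= !mxtraceZ trYtSY trYtSQ trQtSQ -WXtQS.
rewrite GfunE -scalemxAl !mxtraceZ -sqr_sT.
by field.
Qed.

End PSWObjective.

Lemma Gfun_saddle_point (R : rcfType) n T k (X : 'M[R]_(n, T))
    (W : 'M[R]_(k, n)) (S : 'M[R]_k) :
  (k <= T)%N -> is_psd_sqrt (W *m X *m X^T *m W^T) S ->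
  let v := - (2 / Num.sqrt (T%:R)) * \tr S in
  exists Y0 M0, (forall M, Gfun X W Y0 M <= v) /\ (forall Y, v <= Gfun X W Y M0).
Proof.
move=> k_le_T [S_psd SS] v; have [T0 | T_gt0] := posnP T.
  subst T; move: k_le_T; rewrite leqn0 => /eqP k0; subst k.
  have tr0 (A : 'M[R]_0) : \tr A = 0 by rewrite [A]flatmx0 mxtrace0.
  by exists 0, 0; split=> *; rewrite /v GfunE !tr0 !mulr0 !subr0 addr0.
have [Q [QQ1 SQ]] : exists Q, Q *m Q^T = 1%:M /\ S *m Q = W *m X.
  by apply: polar_decomposition S_psd.1 _; rewrite // SS !trmx_mul !mulmxA.
pose sT := Num.sqrt (T%:R : R).
have sT_neq0 : sT != 0 by rewrite gt_eqF // sqrtr_gt0 ltr0n.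
have sqr_sT : sT ^+ 2 = T%:R by rewrite sqr_sqrtr ?ler0n.
exists (sT *: Q), (sT^-1 *: S); split=> [M | Y].
  by rewrite (Gfun_scaled_polar S_psd.1 QQ1 SQ sT_neq0 sqr_sT).
rewrite (Gfun_complete_square S_psd.1 QQ1 SQ sT_neq0 sqr_sT) lerDl.
by rewrite divr_ge0 ?exprn_ge0 ?sqrtr_ge0 ?mxtrace_psd_ge0.
Qed.

Theorem proposition5 (R : rcfType) (n T k : nat)
  (X : 'M[R]_(n, T)) (W : 'M[R]_(k, n)) (S : 'M[R]_k) :
  (k <= minn n T)%N ->
  is_psd_sqrt (W *m X *m X^T *m W^T) S ->
  minmax_eq (fun (Y : 'M[R]_(k, T)) (M : 'M[R]_k) => Gfun X W Y M)
            (- (2 / Num.sqrt (T%:R)) * \tr S) /\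
  maxmin_eq (fun (Y : 'M[R]_(k, T)) (M : 'M[R]_k) => Gfun X W Y M)
            (- (2 / Num.sqrt (T%:R)) * \tr S) /\
  maxmin_eq (fun (Y : 'M[R]_(k, T)) (M : 'M[R]_k) => L_PSW X W M Y)
            (\tr (- (2 / Num.sqrt (T%:R)) *: S + W *m W^T)).
Proof.
rewrite leq_min => /andP[_ k_le_T] sqrtS.
have [Y0 [M0 [le_v ge_v]]] := Gfun_saddle_point k_le_T sqrtS.
have [minmax maxmin] := saddle_point_eq le_v ge_v.
split=> //; split=> //.
rewrite raddfD /= mxtraceZ mxtrace_mulC.
exact: maxmin_eqDr maxmin.
Qed.
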